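(* Let $L\subset\mathbb{Z}^3$ be the sublattice generated by $(4,0,0),(0,2,0),(0,0,2)$, and let $I\subset\mathbb{B}[x_1^{\pm1},x_2^{\pm1},x_3^{\pm1}]$ be the zero-dimensional tropical ideal of degree $2$ corresponding to $L$, i.e. the tropical ideal whose polynomials of minimal support are the binomials $\mathbf x^{\mathbf u}\oplus\mathbf x^{\mathbf v}$ with $\mathbf u\ne\mathbf v$, $\mathbf u-\mathbf v\in L$, and the trinomials $\mathbf x^{\mathbf u}\oplus\mathbf x^{\mathbf v}\oplus\mathbf x^{\mathbf w}$ with $\mathbf u,\mathbf v,\mathbf w$ lying in three distinct cosets of $L$. Then $I$ is not realizable: there is no field $K$ and ideal $J\subset K[x_1^{\pm1},x_2^{\pm1},x_3^{\pm1}]$ with $I=\operatorname{trop}(J)$.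
   Context: $\mathbb{B}=\{\infty,0\}$ with $\oplus=\min$ and multiplication $+$. For a field $K$ and $F\in K[x_1^{\pm1},\dots,x_n^{\pm1}]$, $\operatorname{trop}(F)=\bigoplus_{\mathbf u\in\operatorname{supp}(F)}\mathbf x^{\mathbf u}\in\mathbb{B}[x_1^{\pm1},\dots,x_n^{\pm1}]$, and for an ideal $J$, $\operatorname{trop}(J)$ is the ideal generated by $\{\operatorname{trop}(F):F\in J\}$. A tropical ideal is realizable if it equals $\operatorname{trop}(J)$ for some field $K$ and ideal $J$ over $K$. *)

From HB Require Import structures.
From mathcomp Require Import all_boot all_order all_algebra.
From mathcomp Require Import finmap.

Set Implicit Arguments.
Unset Strict Implicit.
Unset Printing Implicit Defensive.

Import Order.TTheory GRing.Theory Num.Theory.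
Local Open Scope ring_scope.

Definition Z3 := 'rV[int]_3.

Definition laurent (K : fieldType) := {fsfun Z3 -> K with 0}.

Section Laurent.
Variable K : fieldType.

Definition lzero : laurent K := [fsfun].

Definition ladd (F G : laurent K) : laurent K :=
  [fsfun w in (finsupp F `|` finsupp G)%fset => (F w + G w)%R | 0%R].

Definition lmul (F G : laurent K) : laurent K :=
  [fsfun w in [fset (u + v)%R | u in finsupp F, v in finsupp G]%fset =>
     (\sum_(u <- finsupp F) F u * G (w - u))%R | 0%R].

Definition is_ideal (J : laurent K -> Prop) : Prop :=
  [/\ J lzero,
      (forall F G, J F -> J G -> J (ladd F G)) &
      (forall H F, J F -> J (lmul H F))].

Definition supp (F : laurent K) : {fset Z3} := finsupp F.
End Laurent.

(* An element of B[x1^{±1},x2^{±1},x3^{±1}] (B = {oo,0}) is determined by its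
   support: the finite set of exponents whose coefficient is 0 (= the
   multiplicative unit); oo is the zero.  Thus tropical addition (min) is union
   of supports and tropical multiplication (+) is the Minkowski sum. *)
Definition Bpoly := {fset Z3}.

Definition Badd (f g : Bpoly) : Bpoly := (f `|` g)%fset.
Definition Bmul (f g : Bpoly) : Bpoly := [fset (u + v)%R | u in f, v in g]%fset.
Definition Bzero : Bpoly := fset0.

Definition trop (K : fieldType) (F : laurent K) : Bpoly := supp F.

Definition Bideal_gen (G : Bpoly -> Prop) (f : Bpoly) : Prop :=
  exists s : seq (Bpoly * Bpoly),
    (forall p, p \in s -> G p.2) /\
    f = \big[Badd/Bzero]_(p <- s) Bmul p.1 p.2.

Definition trop_ideal (K : fieldType) (J : laurent K -> Prop) (f : Bpoly) : Prop :=
  Bideal_gen (fun g => exists F, J F /\ g = trop F) f.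

Definition e1 : Z3 := \row_(i < 3) (if i == 0%N :> nat then 4 else 0).
Definition e2 : Z3 := \row_(i < 3) (if i == 1%N :> nat then 2 else 0).
Definition e3 : Z3 := \row_(i < 3) (if i == 2%N :> nat then 2 else 0).

Definition inL (v : Z3) : Prop :=
  exists a b c : int, v = a *: e1 + b *: e2 + c *: e3.

(* supports of the minimal-support polynomials (circuits) of I *)
Definition circuit (C : Bpoly) : Prop :=
  (exists u v : Z3, u != v /\ inL (u - v) /\ C = [fset u; v]%fset) \/
  (exists u v w : Z3, ~ inL (u - v) /\ ~ inL (u - w) /\ ~ inL (v - w) /\
                      C = [fset u; v; w]%fset).

(* The tropical ideal I: over B, the elements of a tropical ideal are exactly
   the (finite) unions of its minimal-support elements (the vectors of the
   associated matroid); the empty union is the zero polynomial oo. *)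
Definition I_L (f : Bpoly) : Prop :=
  exists s : seq Bpoly, (forall C, C \in s -> circuit C) /\
    f = \big[Badd/Bzero]_(C <- s) C.

Definition realizable (I : Bpoly -> Prop) : Prop :=
  exists (K : fieldType) (J : laurent K -> Prop),
    is_ideal J /\ (forall f, trop_ideal J f <-> I f).

From HB Require Import structures.
From mathcomp Require Import all_boot all_order all_algebra.
From mathcomp Require Import finmap.
From mathcomp Require Import ring.
Set Implicit Arguments.
Unset Strict Implicit.
Unset Printing Implicit Defensive.
Import Order.TTheory GRing.Theory Num.Theory.
Local Open Scope fset_scope.
Local Open Scope ring_scope.

(* Suppose trop(J) = I for an ideal J of K[x^{+-1}].  Since I is the set of
   unions of its circuits and circuits are pairwise incomparable, every circuit
   of I is exactly the support of some polynomial of J.  Let d1 = (1,0,0) and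
   d2 = (0,1,0).  Take the binomial
   B = b0 + b1 x^(2 d2) (2 d2 in L) and a trinomial T = t0 + t1 x^u + t2 x^d2 of J
   with 0, u, d2 in distinct cosets of L.  Then
     (t0 + t1 x^u - t2 x^d2) T + (t2^2 / b1) B = c + 2 t0 t1 x^u + t1^2 x^(2u)
   lies in J.  In characteristic 2, with u = d1, this is a polynomial of J
   supported on {0, 2 d1}, two incongruent points: impossible, since its support
   would have to contain a circuit.  Otherwise take u = 2 d1; then 4 d1 lies in
   L, so the binomial on {0, 4 d1} cancels the last term, leaving again a
   polynomial of J supported on {0, 2 d1}. *)

Section LaurentCoefficients.
Variable K : fieldType.

Lemma laddE (F G : laurent K) w : ladd F G w = F w + G w.
Proof.
rewrite /ladd fsfunE inE !mem_finsupp.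
case: ifP => //; move/negbT; rewrite negb_or !negbK => /andP[/eqP-> /eqP->].
by rewrite addr0.
Qed.

Definition monomial (c : K) (a : Z3) : laurent K := [fsfun w in [fset a] => c | 0].

Lemma monomialE c a w : monomial c a w = if w == a then c else 0.
Proof. by rewrite /monomial fsfunE inE. Qed.

Lemma finsupp_monomial c a :
  finsupp (monomial c a) = if c == 0 then fset0 else [fset a].
Proof.
apply/fsetP => x; rewrite mem_finsupp monomialE.
have [->|c0] := eqVneq c 0; first by rewrite inE; case: ifP; rewrite ?eqxx.
by rewrite inE; case: (x == a); rewrite ?eqxx.
Qed.

Lemma lmul_monomialE c a (F : laurent K) w : lmul (monomial c a) F w = c * F (w - a).
Proof.
rewrite /lmul fsfunE finsupp_monomial.
have [->|c0] := eqVneq c 0.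
  by rewrite mul0r; case: ifP => // _; rewrite big_seq_fset0.
case: ifP => [_|/negbT wNsupp]; first by rewrite big_seq_fset1 monomialE eqxx.
suff -> : F (w - a) = 0 by rewrite mulr0.
apply/eqP; rewrite -[_ == 0]negbK -mem_finsupp; apply: contra wNsupp => waF.
by apply/imfset2P; exists a; rewrite ?inE //; exists (w - a); rewrite // addrC subrK.
Qed.

Definition kdelta (w p : Z3) : K := (w == p)%:R.

Lemma kdelta_id w : kdelta w w = 1.
Proof. by rewrite /kdelta eqxx. Qed.

Lemma kdelta_shift w a p : kdelta (w - a) p = kdelta w (p + a).
Proof. by rewrite /kdelta subr_eq. Qed.

Lemma expand_on_support (F : laurent K) (s : seq Z3) :
  uniq s -> {subset supp F <= s} ->
  forall w, F w = \sum_(p <- s) F p * kdelta w p.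
Proof.
move=> us sFs w; have [ws|wNs] := boolP (w \in s).
  rewrite (big_rem w ws) /= big1_seq ?kdelta_id ?mulr1 ?addr0 // => p /andP[_].
  by rewrite mem_rem_uniq // inE /kdelta eq_sym => /andP[/negPf-> _]; rewrite mulr0.
have : w \notin finsupp F by apply: contra wNs; apply: sFs.
rewrite mem_finsupp negbK => /eqP->.
rewrite big1_seq // => p /andP[_ ps].
rewrite /kdelta; suff /negPf-> : w != p by rewrite mulr0.
by apply: contraNneq wNs => ->.
Qed.

End LaurentCoefficients.

Lemma in_bigBadd (T : eqType) (s : seq T) (g : T -> Bpoly) x :
  x \in \big[Badd/Bzero]_(p <- s) g p <-> exists2 p, p \in s & x \in g p.
Proof.
elim: s => [|p s IH]; first by rewrite big_nil inE; split => // [[]].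
rewrite big_cons /Badd inE; split.
  case/orP => [xp|/IH [q qs xq]]; first by exists p; rewrite ?inE ?eqxx.
  by exists q; rewrite // inE qs orbT.
move=> [q]; rewrite inE => /orP[/eqP->|qs] xq; first by rewrite xq.
by apply/orP; right; apply/IH; exists q.
Qed.

Lemma IL_covered_by_circuits f x :
  I_L f -> x \in f -> exists C, [/\ circuit C, x \in C & C `<=` f].
Proof.
move=> [s [circ_s ->]] /in_bigBadd [C Cs xC]; exists C; split => //; first exact: circ_s.
by apply/fsubsetP => y yC; apply/in_bigBadd; exists C.
Qed.

Lemma inL0 : inL 0.
Proof. by exists 0, 0, 0; rewrite !scale0r !addr0. Qed.

Lemma inL_sym u v : inL (u - v) -> inL (v - u).
Proof.
move=> [a [b [c uv]]]; exists (- a), (- b), (- c).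
by rewrite -opprB uv !opprD -!scaleNr.
Qed.

Lemma inL_coord v : inL v -> (4 %| v ord0 ord0)%Z /\ (2 %| v ord0 (@Ordinal 3 1 isT))%Z.
Proof. by move=> [a [b [c ->]]]; rewrite !mxE /= !mulr0 !addr0 ?add0r; split; apply: dvdz_mull. Qed.

Lemma incongruent_neq x y : ~ inL (x - y) -> x != y.
Proof. by apply: contra_not_neq => ->; rewrite subrr; apply: inL0. Qed.

Lemma pair_congruent u v x y :
  inL (u - v) -> x \in [fset u; v] -> y \in [fset u; v] -> inL (x - y).
Proof.
move=> Luv; rewrite !inE => /orP[]/eqP-> /orP[]/eqP->; rewrite ?subrr //;
  by [apply: inL0 | apply: inL_sym].
Qed.

Lemma triple_incongruent u v w x y : ~ inL (u - v) -> ~ inL (u - w) -> ~ inL (v - w) ->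
  x \in [fset u; v; w] -> y \in [fset u; v; w] -> x != y -> ~ inL (x - y).
Proof.
move=> Luv Luw Lvw; rewrite !inE => /orP[/orP[]|]/eqP-> /orP[/orP[]|]/eqP->;
  rewrite ?eqxx // => _ /inL_sym; assumption.
Qed.

Lemma card_triple u v w : ~ inL (u - v) -> ~ inL (u - w) -> ~ inL (v - w) ->
  #|` [fset u; v; w]| = 3%N.
Proof.
move=> /incongruent_neq uv /incongruent_neq uw /incongruent_neq vw.
by rewrite fsetUC cardfsU1 cardfs2 uv !inE negb_or eq_sym uw eq_sym vw.
Qed.

Lemma circuit_incomparable C D : circuit C -> circuit D -> C `<=` D -> C = D.
Proof.
move=> cC cD CD; apply/eqP; rewrite eqEfcard CD /=.
case: cC CD => [[u [v [uv [Luv ->]]]] | [u [v [w [Luv [Luw [Lvw ->]]]]]]] CD.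
  case: cD CD => [[p [q [_ [_ ->]]]] | [p [q [r [Lpq [Lpr [Lqr ->]]]]]]] CD.
    by rewrite !cardfs2 uv; case: (p != q).
  have [Lu Lv] : u \in [fset p; q; r] /\ v \in [fset p; q; r].
    by split; apply: (fsubsetP CD); rewrite !inE eqxx ?orbT.
  by case: (triple_incongruent Lpq Lpr Lqr Lu Lv uv Luv).
rewrite card_triple //.
case: cD => [[p [q [_ [_ ->]]]] | [p [q [r [Lpq [Lpr [Lqr ->]]]]]]].
  by rewrite cardfs2; case: (p != q).
by rewrite card_triple.
Qed.

Lemma circuit_in_pair C p q : circuit C -> C `<=` [fset p; q] -> inL (p - q).
Proof.
case => [[u [v [uv [Luv ->]]]] | [u [v [w [Luv [Luw [Lvw ->]]]]]]] Cpq.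
  have /eqP uv_pq : [fset u; v] == [fset p; q].
    by rewrite eqEfcard Cpq !cardfs2 uv; case: (p != q).
  by apply: (pair_congruent Luv); rewrite uv_pq !inE eqxx ?orbT.
by have := fsubset_leq_card Cpq; rewrite card_triple // cardfs2; case: (p != q).
Qed.

Section Realization.
Variables (K : fieldType) (J : laurent K -> Prop).
Hypothesis J_ideal : is_ideal J.
Hypothesis J_trop : forall f, trop_ideal J f <-> I_L f.

Lemma J_add F G : J F -> J G -> J (ladd F G).
Proof. by case: J_ideal => _ addJ _; apply: addJ. Qed.

Lemma J_mul_monomial c a F : J F -> J (lmul (monomial c a) F).
Proof. by case: J_ideal => _ _; apply. Qed.

Lemma supp_J_in_IL F : J F -> I_L (supp F).
Proof.
move=> JF; apply/J_trop; exists [:: ([fset 0], supp F)]; split.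
  by move=> p; rewrite inE => /eqP-> /=; exists F.
rewrite big_cons big_nil /Badd /Bzero fsetU0 /Bmul /=; apply/fsetP => x; apply/idP/imfset2P.
  by move=> xF; exists 0; rewrite ?inE //; exists x; rewrite ?add0r.
by move=> [u]; rewrite inE => /eqP-> [v vF ->]; rewrite add0r.
Qed.

(* Every circuit contains the support of a nonzero polynomial of J: a point of
   the circuit comes from some term  x^a (.) trop(F)  with F in J. *)
Lemma J_meets_circuit C : circuit C ->
  exists F, [/\ J F, supp F `<=` C & supp F != fset0].
Proof.
move=> cC.
have [x xC] : exists x, x \in C.
  by case: cC => [[u [? [_ [_ ->]]]]|[u [? [? [_ [_ [_ ->]]]]]]]; exists u; rewrite !inE eqxx.
have /J_trop [s [trop_s defC]] : I_L C.
  exists [:: C]; rewrite big_cons big_nil /Badd /Bzero fsetU0.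
  by split => // C'; rewrite inE => /eqP->.
move: xC; rewrite {1}defC => /in_bigBadd [[h g] hg_s /imfset2P [a ah [y yg _]]] /=.
have [F [JF /= g_trop]] := trop_s _ hg_s; subst g.
have hg_C : Bmul h (trop F) `<=` C.
  by rewrite defC; apply/fsubsetP => z z_hg; apply/in_bigBadd; exists (h, trop F).
exists (lmul (monomial 1 a) F); split; first exact: J_mul_monomial.
  apply/fsubsetP => z; rewrite /supp mem_finsupp lmul_monomialE mul1r => Fz.
  apply: (fsubsetP hg_C); apply/imfset2P; exists a => //; exists (z - a).
    by rewrite /trop /supp mem_finsupp.
  by rewrite addrC subrK.
apply/fset0Pn; exists (a + y); rewrite /supp mem_finsupp lmul_monomialE mul1r.
by rewrite (addrC a y) addrK -mem_finsupp.
Qed.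

(* Hence every circuit is exactly the support of a polynomial of J, since
   circuits are incomparable. *)
Lemma J_circuit C : circuit C -> exists F, J F /\ supp F = C.
Proof.
move=> /[dup] cC /J_meets_circuit [F [JF FC /fset0Pn [x xF]]].
have [D [cD _ DF]] := IL_covered_by_circuits (supp_J_in_IL JF) xF.
have DC := circuit_incomparable cD cC (fsubset_trans DF FC).
by exists F; split => //; apply/eqP; rewrite eqEfsubset FC -DC.
Qed.

Lemma J_binomial p q : p != q -> inL (p - q) -> exists F, [/\ J F, F q != 0 &
  forall w, F w = F p * kdelta K w p + F q * kdelta K w q].
Proof.
move=> pq Lpq; have [F [JF suppF]] : exists F, J F /\ supp F = [fset p; q].
  by apply: J_circuit; left; exists p, q.
exists F; split => //; first by rewrite -mem_finsupp -/(supp F) suppF !inE eqxx orbT.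
move=> w; rewrite (@expand_on_support _ F [:: p; q]) ?big_cons ?big_nil ?addr0 //=.
  by rewrite inE pq.
by move=> x; rewrite suppF !inE.
Qed.

Lemma J_trinomial p q r : ~ inL (p - q) -> ~ inL (p - r) -> ~ inL (q - r) ->
  exists F, [/\ J F, F p != 0, F q != 0 &
    forall w, F w = F p * kdelta K w p + F q * kdelta K w q + F r * kdelta K w r].
Proof.
move=> Lpq Lpr Lqr; have [F [JF suppF]] : exists F, J F /\ supp F = [fset p; q; r].
  by apply: J_circuit; right; exists p, q, r.
have Fsupp x : x \in [fset p; q; r] -> F x != 0 by rewrite -suppF mem_finsupp.
exists F; split => //; try by apply: Fsupp; rewrite !inE eqxx ?orbT.
move=> w; rewrite (@expand_on_support _ F [:: p; q; r]) ?big_cons ?big_nil ?addr0 ?addrA //=.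
  by rewrite !inE negb_or !incongruent_neq.
by move=> x; rewrite suppF !inE orbA.
Qed.

(* A polynomial of J supported on {p, q}, with q in its support, has congruent
   exponents: its support contains a circuit, which must be {p, q}. *)
Lemma J_pair_congruent F p q c e : J F ->
  (forall w, F w = c * kdelta K w p + e * kdelta K w q) -> e != 0 -> inL (p - q).
Proof.
move=> JF defF e0; have [<-|qp] := eqVneq q p; first by rewrite subrr; apply: inL0.
have qF : q \in supp F by rewrite mem_finsupp defF /kdelta (negPf qp) eqxx mulr0 mulr1 add0r.
have [C [cC _ CF]] := IL_covered_by_circuits (supp_J_in_IL JF) qF.
apply: (circuit_in_pair cC); apply: (fsubset_trans CF).
apply/fsubsetP => w; rewrite mem_finsupp defF /kdelta !inE.
by case: (w == p); case: (w == q); rewrite ?orbT // !mulr0 addr0 eqxx.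
Qed.

(* Multiplying T = t0 + t1 x^u + t2 x^b by t0 + t1 x^u - t2 x^b squares the
   first two terms and turns the third into - t2^2 x^(2b); the mixed terms
   involving x^b cancel. *)
Lemma J_multiply_trinomial T u b t0 t1 t2 : J T ->
  (forall w, T w = t0 * kdelta K w 0 + t1 * kdelta K w u + t2 * kdelta K w b) ->
  exists Q, J Q /\ forall w, Q w = t0 ^+ 2 * kdelta K w 0
    + (2 * t0 * t1 * kdelta K w u + t1 ^+ 2 * kdelta K w (u + u))
    + (- t2 ^+ 2) * kdelta K w (b + b).
Proof.
move=> JT defT; exists (ladd (ladd (lmul (monomial t0 0) T) (lmul (monomial t1 u) T))
  (lmul (monomial (- t2) b) T)).
split; first by apply: J_add; [apply: J_add|]; apply: J_mul_monomial.
move=> w; rewrite !laddE !lmul_monomialE !defT !kdelta_shift !addr0 !add0r (addrC b u).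
ring.
Qed.

Lemma J_eliminate P B (R : Z3 -> K) v c g b0 b1 : J P -> J B -> b1 != 0 ->
  (forall w, P w = c * kdelta K w 0 + R w + g * kdelta K w v) ->
  (forall w, B w = b0 * kdelta K w 0 + b1 * kdelta K w v) ->
  exists P', J P' /\ forall w, P' w = (c - g * b0 / b1) * kdelta K w 0 + R w.
Proof.
move=> JP JB b1_0 defP defB; exists (ladd P (lmul (monomial (- (g / b1)) 0) B)).
split; first by apply: J_add => //; apply: J_mul_monomial.
by move=> w; rewrite laddE lmul_monomialE subr0 defP defB; field.
Qed.

Lemma J_square_trinomial T B u b t0 t1 t2 b0 b1 : J T -> J B -> b1 != 0 ->
  (forall w, T w = t0 * kdelta K w 0 + t1 * kdelta K w u + t2 * kdelta K w b) ->
  (forall w, B w = b0 * kdelta K w 0 + b1 * kdelta K w (b + b)) ->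
  exists P c, J P /\ forall w,
    P w = c * kdelta K w 0 + 2 * t0 * t1 * kdelta K w u + t1 ^+ 2 * kdelta K w (u + u).
Proof.
move=> JT JB b1_0 defT defB.
have [Q [JQ defQ]] := J_multiply_trinomial JT defT.
have [P [JP defP]] := J_eliminate JQ JB b1_0 defQ defB.
by exists P, (t0 ^+ 2 - - t2 ^+ 2 * b0 / b1); split => // w; rewrite defP addrA.
Qed.
End Realization.

Definition d1 : Z3 := \row_(i < 3) (if i == 0%N :> nat then 1 else 0).
Definition d2 : Z3 := \row_(i < 3) (if i == 1%N :> nat then 1 else 0).

(* The exponents 0, d1, 2 d1 and d2 lie in pairwise distinct cosets of L
   (Z^3 / L = Z/4 x Z/2 x Z/2) ... *)
Lemma exponents_incongruent : [/\ ~ inL (0 - d1), ~ inL (0 - d2), ~ inL (d1 - d2),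
  ~ inL (0 - (d1 + d1)) & ~ inL (d1 + d1 - d2)].
Proof. by split; move/inL_coord => []; rewrite !mxE. Qed.

Lemma doubles_in_L : [/\ 0 != d2 + d2, inL (0 - (d2 + d2)),
  0 != d1 + d1 + (d1 + d1) & inL (0 - (d1 + d1 + (d1 + d1)))].
Proof.
split; first [by apply/eqP => /rowP /(_ (@Ordinal 3 1 isT)); rewrite !mxE
             | by apply/eqP => /rowP /(_ ord0); rewrite !mxE | idtac].
  by exists 0, (-1), 0; apply/rowP => i; rewrite !mxE; case: i => [[|[|[|]]]].
by exists (-1), 0, 0; apply/rowP => i; rewrite !mxE; case: i => [[|[|[|]]]].
Qed.

Theorem mainTheorem12 : ~ realizable I_L.
Proof.
move=> [K [J [J_ideal J_trop]]].
have [n01 n02 n12 n0a nab] := exponents_incongruent.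
have [nb Lb na La] := doubles_in_L.
have [B [JB B0 defB]] := J_binomial J_ideal J_trop nb Lb.
have [two0|two_n0] := eqVneq (2%:R : K) 0.
  have [T [JT _ T1 defT]] := J_trinomial J_ideal J_trop n01 n02 n12.
  have [P [c [JP defP]]] := J_square_trinomial J_ideal JT JB B0 defT defB.
  have {}defP w : P w = c * kdelta K w 0 + T d1 ^+ 2 * kdelta K w (d1 + d1).
    by rewrite defP two0 !mul0r addr0.
  exact: n0a (J_pair_congruent J_trop JP defP (expf_neq0 _ T1)).
have [T [JT T0 Ta defT]] := J_trinomial J_ideal J_trop n0a n02 nab.
have [P [c [JP defP]]] := J_square_trinomial J_ideal JT JB B0 defT defB.
have [B' [JB' B'0 defB']] := J_binomial J_ideal J_trop na La.
have [P' [JP' defP']] := J_eliminate J_ideal JP JB' B'0 defP defB'.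
exact: n0a (J_pair_congruent J_trop JP' defP' (mulf_neq0 (mulf_neq0 two_n0 T0) Ta)).
Qed.
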